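(* Let $(W,S)$ be a Coxeter system with $S=\{s_0,\dots,s_n\}$ finite, and let $\widetilde\varphi:G_{n,2}\to W$ be the epimorphism with $\widetilde\varphi(\alpha_i)=s_i$; let $H=\ker\widetilde\varphi$. Then $\widetilde{\mathfrak X}_{n,2}(H)$ is a simplicial complex (all multiplicities $1$) and it is isomorphic to the Coxeter complex $X(W,S)$.
   Context: A Coxeter system $(W,S)$: $W$ has presentation $\langle S\mid (st)^{m_{st}},\ s,t\in S\rangle$ with $m_{ss}=1$, $m_{st}\in\{2,3,\dots\}\cup\{\infty\}$ for $s\neq t$ (no relation when $\infty$). For $J\subseteq\{0,\dots,n\}$, $W_J=\langle s_i:i\in J\rangle$ and $\widehat J=\{0,\dots,n\}\setminus J$, $\widehat i=\widehat{\{i\}}$. The Coxeter complex $X(W,S)$ has as vertices the cosets $W_{\widehat i}w$ ($i\in\{0,\dots,n\}$, $w\in W$) and as cells the sets $\{W_{\widehat i}w:i\in J\}$ for $w\in W$, $J\subseteq\{0,\dots,n\}$. $G_{n,2}=\langle\alpha_0,\dots,\alpha_n\mid\alpha_i^2=e\rangle$; $K_J=\langle\alpha_j:j\in J\rangle$. For $H\le G_{n,2}$, $[K_{\widehat J}g]_H=\{K_{\widehat J}gh:h\in H\}$; the multicomplex $\widetilde{\mathfrak X}_{n,2}(H)$ has multicells $[K_{\widehat J}g]_H$ of dimension $|J|-1$, the multicell $[K_{\widehat J}g]_H$ lying over the cell $\{[K_{\widehat i}g]_H:i\in J\}$, and the multiplicity of a cell is the number of multicells over it. *)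

From mathcomp Require Import all_boot.
Set Implicit Arguments. Unset Strict Implicit. Unset Printing Implicit Defensive.

Record group := Group {
  carrier :> Type;
  gmul : carrier -> carrier -> carrier;
  gone : carrier;
  ginv : carrier -> carrier;
  gmulA : forall x y z, gmul x (gmul y z) = gmul (gmul x y) z;
  gmul1 : forall x, gmul gone x = x;
  gmulV : forall x, gmul (ginv x) x = gone }.

(* ---------- G_{n,2} = free product of n+1 copies of Z/2 ----------
   Elements are reduced words in the letters 'I_n.+1 (no two equal
   adjacent letters); the letter i is alpha_i. *)
Section Gn2.
Variable n : nat.
Notation L := 'I_n.+1.

Definition reduced (s : seq L) : bool := sorted (fun a b => a != b) s.

Definition push (a : L) (s : seq L) : seq L :=
  if s is b :: t then (if a == b then t else a :: s) else [:: a].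

Lemma push_reduced a s : reduced s -> reduced (push a s).
Proof.
case: s => [|b t] //= Hs.
case: ifP => [_|/negbT Hab]; first by case: t Hs => //= c t /andP [].
by rewrite /reduced /= Hab.
Qed.

Definition Gn2 := {s : seq L | reduced s}.

Lemma foldr_push_reduced (x y : seq L) :
  reduced y -> reduced (foldr push y x).
Proof. by elim: x => //= a x IH Hy; apply: push_reduced; apply: IH. Qed.

Lemma foldl_push_reduced (x y : seq L) :
  reduced y -> reduced (foldl (fun acc a => push a acc) y x).
Proof. by elim: x y => //= a x IH y Hy; apply: IH; apply: push_reduced. Qed.

Definition mulG (x y : Gn2) : Gn2 :=
  exist _ (foldr push (sval y) (sval x)) (foldr_push_reduced (sval x) (svalP y)).
Definition oneG : Gn2 := exist _ [::] (isT : reduced [::]).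
Definition invG (x : Gn2) : Gn2 :=
  exist _ (foldl (fun acc a => push a acc) [::] (sval x))
        (foldl_push_reduced (sval x) (isT : reduced [::])).
Definition alpha (i : L) : Gn2 := exist _ [:: i] (isT : reduced [:: i]).
Definition expG (x : Gn2) (k : nat) : Gn2 := iter k (mulG x) oneG.

(* K_J = < alpha_j : j in J > : the reduced words using only letters of J *)
Definition inK (J : {set L}) (x : Gn2) : Prop := all (fun a => a \in J) (sval x).
Definition cosetK (J : {set L}) (g : Gn2) : Gn2 -> Prop :=
  fun x => inK J (mulG x (invG g)).

(* Multicell [K_{\hat J} g]_H = { K_{\hat J} g h : h in H }, as a set of
   subsets of G_{n,2} *)
Definition multicell (H : Gn2 -> Prop) (J : {set L}) (g : Gn2)
  : (Gn2 -> Prop) -> Prop :=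
  fun X => exists h, H h /\ forall x, X x <-> cosetK (~: J) (mulG g h) x.

Definition mc_eq (H : Gn2 -> Prop) (J : {set L}) g (J' : {set L}) g' : Prop :=
  forall X, multicell H J g X <-> multicell H J' g' X.

(* vertices [K_{\hat i} g]_H, represented by pairs (i, g) *)
Definition vertX (H : Gn2 -> Prop) (a b : L * Gn2) : Prop :=
  mc_eq H [set a.1] a.2 [set b.1] b.2.

(* the cell { [K_{\hat i} g]_H : i in J } over the multicell [K_{\hat J} g]_H,
   as a (representative-closed) set of vertices *)
Definition cellX (H : Gn2 -> Prop) (J : {set L}) (g : Gn2) (v : L * Gn2) : Prop :=
  exists2 i, i \in J & vertX H v (i, g).

Definition multiplicity_one (H : Gn2 -> Prop) : Prop :=
  forall J g J' g', (forall v, cellX H J g v <-> cellX H J' g' v) ->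
    mc_eq H J g J' g'.

(* Coxeter matrix; None stands for m_st = infinity *)
Definition coxeter_matrix (m : L -> L -> option nat) : Prop :=
  [/\ forall i, m i i = Some 1,
      forall i j, m i j = m j i &
      forall i j k, i != j -> m i j = Some k -> 2 <= k].

Inductive nclos (m : L -> L -> option nat) : Gn2 -> Prop :=
| nc_rel i j k : m i j = Some k -> nclos m (expG (mulG (alpha i) (alpha j)) k)
| nc_one : nclos m oneG
| nc_mul x y : nclos m x -> nclos m y -> nclos m (mulG x y)
| nc_inv x : nclos m x -> nclos m (invG x)
| nc_conj g x : nclos m x -> nclos m (mulG (invG g) (mulG x g)).

Definition phi (W : group) (s : L -> W) (g : Gn2) : W :=
  foldr (fun i acc => gmul (s i) acc) (gone W) (sval g).

(* (W,S) with S = {s_0..s_n} is a Coxeter system with matrix m, i.e.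
   W = < S | (s_i s_j)^{m_ij} > : the s_i are involutions (so phi is a
   homomorphism G_{n,2} -> W), phi is onto, and ker phi is the normal
   closure of the relators. *)
Definition coxeter_system (W : group) (s : L -> W) (m : L -> L -> option nat) : Prop :=
  [/\ forall i, gmul (s i) (s i) = gone W,
      forall w : W, exists g, phi s g = w &
      forall g, phi s g = gone W <-> nclos m g].

Definition kerphi (W : group) (s : L -> W) : Gn2 -> Prop :=
  fun g => phi s g = gone W.

Inductive inWJ (W : group) (s : L -> W) (J : {set L}) : W -> Prop :=
| wj_one : inWJ s J (gone W)
| wj_gen j : j \in J -> inWJ s J (s j)
| wj_mul x y : inWJ s J x -> inWJ s J y -> inWJ s J (gmul x y)
| wj_inv x : inWJ s J x -> inWJ s J (ginv x).

Definition cosetW (W : group) (s : L -> W) (J : {set L}) (w : W) : W -> Prop :=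
  fun x => inWJ s J (gmul x (ginv w)).

(* vertices W_{\hat i} w, represented by pairs (i, w) *)
Definition vertW (W : group) (s : L -> W) (a b : L * W) : Prop :=
  forall x, cosetW s (~: [set a.1]) a.2 x <-> cosetW s (~: [set b.1]) b.2 x.

Definition cellW (W : group) (s : L -> W) (J : {set L}) (w : W) (v : L * W) : Prop :=
  exists2 i, i \in J & vertW s v (i, w).

(* isomorphism between the (simplicial) complex underlying the multicomplex
   and the Coxeter complex: a bijection of vertices (up to the identification
   of representatives) carrying cells exactly onto cells *)
Definition complex_iso (H : Gn2 -> Prop) (W : group) (s : L -> W)
  (F : L * Gn2 -> L * W) : Prop :=
  [/\ forall a b, vertX H a b <-> vertW s (F a) (F b),
      forall b, exists a, vertW s (F a) b,
      forall J g, exists J' w, forall b,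
         (exists2 a, cellX H J g a & vertW s (F a) b) <-> cellW s J' w b &
      forall J' w, exists J g, forall b,
         (exists2 a, cellX H J g a & vertW s (F a) b) <-> cellW s J' w b].

End Gn2.

From Pilot Require Import Defs.
From mathcomp Require Import all_boot all_algebra all_field.
From mathcomp.algebra_tactics Require Import ring.
From Stdlib Require Import ClassicalEpsilon FunctionalExtensionality Classical.
Set Implicit Arguments. Unset Strict Implicit. Unset Printing Implicit Defensive.

(* phi : G_{n,2} -> W is onto with kernel H, so [K_^J g]_H = [K_^J' g']_H
   exactly when J = J' and phi g' (phi g)^-1 lies in W_^J, and likewise for the
   cosets W_^i w, since s_j lies in W_I only if j is in I. Thus phi induces an
   isomorphism with the Coxeter complex, and multicells are determined by their
   vertices as soon as the intersection of the W_^i, i in J, is W_^J. Both facts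
   follow from the exchange condition, which makes every reduced word of an
   element of W_I a word in the letters of I, and from s_j not lying in W_I for
   j outside I. The first comes from Tits' reflection cocycle, the second from a
   deformation of the geometric representation; both are representations of W
   because W is presented by the Coxeter relations. *)

Notation "x ⊙ y" := (gmul x y) (at level 40, left associativity).

Section GroupTheory.
Variable G : group.
Implicit Types x y z : G.

Lemma gmulVr x : x ⊙ ginv x = gone G.
Proof.
have idem : (x ⊙ ginv x) ⊙ (x ⊙ ginv x) = x ⊙ ginv x.
  by rewrite -gmulA (gmulA (ginv x)) gmulV gmul1.
set y := x ⊙ ginv x in idem *.
by rewrite -(gmul1 y) -(gmulV y) -gmulA idem.
Qed.

Lemma gmulr1 x : x ⊙ gone G = x.
Proof. by rewrite -(gmulV x) gmulA gmulVr gmul1. Qed.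

Lemma gmulKV x y : ginv x ⊙ (x ⊙ y) = y.
Proof. by rewrite gmulA gmulV gmul1. Qed.

Lemma gmulVK x y : x ⊙ (ginv x ⊙ y) = y.
Proof. by rewrite gmulA gmulVr gmul1. Qed.

Lemma gmulrK x y : x ⊙ y ⊙ ginv y = x.
Proof. by rewrite -gmulA gmulVr gmulr1. Qed.

Lemma gmulI x y z : x ⊙ y = x ⊙ z -> y = z.
Proof. by move=> e; rewrite -(gmulKV x y) e gmulKV. Qed.

Lemma ginv_uniq x y : x ⊙ y = gone G -> y = ginv x.
Proof. by move=> e; apply: (gmulI (x := x)); rewrite e gmulVr. Qed.

Lemma ginvK x : ginv (ginv x) = x.
Proof. by symmetry; apply: ginv_uniq; rewrite gmulV. Qed.

Lemma ginvM x y : ginv (x ⊙ y) = ginv y ⊙ ginv x.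
Proof. by symmetry; apply: ginv_uniq; rewrite gmulA gmulrK gmulVr. Qed.

Lemma ginv1 : ginv (gone G) = gone G.
Proof. by symmetry; apply: ginv_uniq; rewrite gmul1. Qed.

Lemma ginv_id_of_sqr1 x : x ⊙ x = gone G -> ginv x = x.
Proof. by move=> e; symmetry; apply: ginv_uniq. Qed.

Section Cosets.
Variable S : G -> Prop.
Hypothesis SM : forall x y, S x -> S y -> S (x ⊙ y).
Hypothesis SV : forall x, S x -> S (ginv x).

Lemma coset_trans a b x : S (a ⊙ ginv b) -> S (x ⊙ ginv a) -> S (x ⊙ ginv b).
Proof. by move=> Hab Hx; have := SM Hx Hab; rewrite -gmulA gmulKV. Qed.

Lemma coset_sym a b : S (a ⊙ ginv b) -> S (b ⊙ ginv a).
Proof. by move/SV; rewrite ginvM ginvK. Qed.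

End Cosets.
End GroupTheory.

Section FreeProduct.
Variable n : nat.
Local Notation L := 'I_n.+1.

Definition reduce (l : seq L) : Gn2 n :=
  exist _ (foldr (@push n) [::] l) (foldr_push_reduced l (isT : reduced [::])).

Lemma foldl_push (x z : seq L) :
  foldl (fun acc a => push a acc) z x = foldr (@push n) z (rev x).
Proof. by elim: x z => //= a x IH z; rewrite IH rev_cons -cats1 foldr_cat. Qed.

Lemma push_invol a (u : seq L) : reduced u -> push a (push a u) = u.
Proof.
case: u => [|b t] /=; first by rewrite eqxx.
case: (eqVneq a b) => [<-|nab] Hr; last by rewrite /= eqxx.
by case: t Hr => [|c t] //= /andP [/negbTE ->].
Qed.

Lemma foldr_push_push z a (w : seq L) : reduced z ->
  foldr (@push n) z (push a w) = push a (foldr (@push n) z w).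
Proof.
move=> Hz; case: w => [|b w] //=.
case: (eqVneq a b) => [<-|//] /=.
by rewrite push_invol // foldr_push_reduced.
Qed.

Lemma foldr_push_cat z (x y : seq L) : reduced z ->
  foldr (@push n) z (foldr (@push n) y x) = foldr (@push n) z (x ++ y).
Proof. by move=> Hz; elim: x => //= a x IH; rewrite foldr_push_push // IH. Qed.

Lemma foldr_push_rev (l s : seq L) : foldr (@push n) (l ++ s) (rev l) = s.
Proof.
elim: l => //= a l IH.
by rewrite rev_cons -cats1 foldr_cat /= eqxx IH.
Qed.

Lemma mulGA (x y z : Gn2 n) : mulG x (mulG y z) = mulG (mulG x y) z.
Proof. by apply: val_inj; rewrite /= foldr_push_cat ?(svalP z) // foldr_cat. Qed.

Lemma mul1G (x : Gn2 n) : mulG (oneG n) x = x.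
Proof. exact: val_inj. Qed.

Lemma mulVG (x : Gn2 n) : mulG (invG x) x = oneG n.
Proof.
apply: val_inj; rewrite /= foldl_push foldr_push_cat ?(svalP x) //.
by rewrite cats0 -{1}(cats0 (sval x)) foldr_push_rev.
Qed.

Definition Gn2_group : group :=
  @Defs.Group (Gn2 n) (@mulG n) (oneG n) (@invG n) mulGA mul1G mulVG.

Lemma mulGV (x : Gn2 n) : mulG x (invG x) = oneG n.
Proof. exact: (@gmulVr Gn2_group). Qed.

Lemma mulG1 (x : Gn2 n) : mulG x (oneG n) = x.
Proof. exact: (@gmulr1 Gn2_group). Qed.

Lemma mulGK (x y : Gn2 n) : mulG (mulG x y) (invG y) = x.
Proof. exact: (@gmulrK Gn2_group). Qed.

Lemma mulVKG (x y : Gn2 n) : mulG x (mulG (invG x) y) = y.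
Proof. exact: (@gmulVK Gn2_group). Qed.

Lemma invGM (x y : Gn2 n) : invG (mulG x y) = mulG (invG y) (invG x).
Proof. exact: (@ginvM Gn2_group). Qed.

Lemma mem_push a (u : seq L) c : c \in push a u -> c \in a :: u.
Proof. by case: u => [|b t] //=; case: eqP => // _ H; rewrite !inE H !orbT. Qed.

Lemma mem_foldr_push (x y : seq L) : {subset foldr (@push n) y x <= x ++ y}.
Proof.
elim: x => //= a x IH c /mem_push; rewrite !inE => /orP [->//|/IH ->].
by rewrite orbT.
Qed.

Lemma inKM (A : {set L}) (x y : Gn2 n) : inK A x -> inK A y -> inK A (mulG x y).
Proof.
move=> /allP Hx /allP Hy; apply/allP => c /mem_foldr_push.
by rewrite mem_cat => /orP [/Hx|/Hy].
Qed.

Lemma inKV (A : {set L}) (x : Gn2 n) : inK A x -> inK A (invG x).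
Proof.
move=> /allP Hx; apply/allP => c; rewrite /invG /= foldl_push.
by move/mem_foldr_push; rewrite cats0 mem_rev => /Hx.
Qed.

Lemma cosetK_sub (A B : {set L}) (a b : Gn2 n) :
  (forall x, cosetK A a x <-> cosetK B b x) ->
  A \subset B /\ inK B (mulG a (invG b)).
Proof.
move=> E; have Hab : inK B (mulG a (invG b)).
  by apply/E; rewrite /cosetK mulGV.
split=> //; apply/subsetP => c cA.
have : cosetK B b (mulG (alpha c) a).
  by apply/E; rewrite /cosetK mulGK /inK /= cA.
rewrite /cosetK => /inKM /(_ (inKV Hab)).
by rewrite -[mulG (mulG (alpha c) a) _]mulGA mulGK /inK /= andbT.
Qed.

Lemma cosetK_eq (A B : {set L}) (a b : Gn2 n) :
  (forall x, cosetK A a x <-> cosetK B b x) -> A = B /\ inK A (mulG a (invG b)).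
Proof.
move=> E; have [sAB Hab] := cosetK_sub E.
have [sBA _] := cosetK_sub (fun x => iff_sym (E x)).
have AB : A = B by apply/eqP; rewrite eqEsubset sAB sBA.
by rewrite AB.
Qed.

Section WordEval.
Variables (M : Type) (mop : M -> M -> M) (mone : M).
Hypothesis mA : forall x y z, mop x (mop y z) = mop (mop x y) z.
Hypothesis m1l : forall x, mop mone x = x.
Hypothesis m1r : forall x, mop x mone = x.
Variable e : L -> M.
Hypothesis e2 : forall a, mop (e a) (e a) = mone.

Definition eval_word (l : seq L) : M := foldr (fun a acc => mop (e a) acc) mone l.

Lemma eval_word_cat x y : eval_word (x ++ y) = mop (eval_word x) (eval_word y).
Proof. by elim: x => /= [|a x IH]; rewrite ?m1l // IH mA. Qed.

Lemma eval_word_push a u : eval_word (push a u) = mop (e a) (eval_word u).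
Proof.
case: u => [|b u] //=.
by case: (eqVneq a b) => [<-|] //=; rewrite mA e2 m1l.
Qed.

Lemma eval_word_foldr_push x y :
  eval_word (foldr (@push n) y x) = mop (eval_word x) (eval_word y).
Proof. by elim: x => /= [|a x IH]; rewrite ?m1l // eval_word_push IH mA. Qed.

Lemma eval_word_revK x : mop (eval_word (rev x)) (eval_word x) = mone.
Proof.
have := eval_word_foldr_push (rev x) (x ++ [::]).
by rewrite foldr_push_rev eval_word_cat /= m1r => <-.
Qed.

Lemma eval_word_revKr x : mop (eval_word x) (eval_word (rev x)) = mone.
Proof. by have := eval_word_revK (rev x); rewrite revK. Qed.

Definition eval_Gn2 (g : Gn2 n) : M := eval_word (sval g).

Lemma eval_Gn2_mul x y : eval_Gn2 (mulG x y) = mop (eval_Gn2 x) (eval_Gn2 y).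
Proof. exact: eval_word_foldr_push. Qed.

Lemma eval_Gn2_inv x : eval_Gn2 (invG x) = eval_word (rev (sval x)).
Proof. by rewrite /eval_Gn2 /= foldl_push eval_word_foldr_push /= m1r. Qed.

Lemma eval_Gn2_exp x k : eval_Gn2 (expG x k) = iter k (mop (eval_Gn2 x)) mone.
Proof. by elim: k => //= k IH; rewrite eval_Gn2_mul IH. Qed.

Variable m : L -> L -> option nat.
Hypothesis rel : forall i j k, m i j = Some k ->
  iter k (mop (mop (e i) (e j))) mone = mone.

Lemma eval_nclos g : nclos m g -> eval_Gn2 g = mone.
Proof.
elim=> {g} [i j k mij| |x y _ Hx _ Hy|x _ Hx|g x _ Hx].
- by rewrite eval_Gn2_exp eval_Gn2_mul /eval_Gn2 /= !m1r; exact: rel.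
- by [].
- by rewrite eval_Gn2_mul Hx Hy m1l.
- by rewrite eval_Gn2_inv -[LHS]m1r -Hx eval_word_revK.
- by rewrite !eval_Gn2_mul Hx m1l eval_Gn2_inv eval_word_revK.
Qed.

End WordEval.
End FreeProduct.

Section GeometricRepresentation.
Import GRing.Theory Num.Theory.
Local Open Scope ring_scope.

Variable n : nat.
Local Notation L := 'I_n.+1.
Local Notation V := (L -> algC).
Variable m : L -> L -> option nat.

Definition prim_root (k : nat) : algC :=
  if k is k'.+1 then sval (C_prim_root_exists (ltn0Sn k')) else 1.

Lemma prim_rootP k : (0 < k)%N -> k.-primitive_root (prim_root k).
Proof. by case: k => // k _; exact: (svalP (C_prim_root_exists _)). Qed.

(* Instead of the symmetric entries -2 cos (pi / m_ij) of the geometric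
   representation we use -(1 + q) and -(1 + q^-1), q a primitive m_ij-th root
   of unity (q = 1 when m_ij is infinite): their product 2 + q + q^-1 is again
   of the form 4 cos^2 (pi k / m_ij), and s_i s_j acts with eigenvalues q, q^-1. *)
Definition order_root (o : option nat) : algC :=
  if o is Some k then prim_root k else 1.

Definition cox_q (i j : L) : algC :=
  if (i < j)%N then order_root (m i j) else (order_root (m j i))^-1.

Definition cartan (i j : L) : algC := if i == j then 2 else - (1 + cox_q i j).

Definition cform (l : L) (v : V) : algC := \sum_r cartan l r * v r.

Definition cox_refl (l : L) (v : V) : V :=
  fun p => if p == l then v p - cform l v else v p.

Lemma cartan_diag i : cartan i i = 2.
Proof. by rewrite /cartan eqxx. Qed.

Lemma cform_refl p l v : cform p (cox_refl l v) = cform p v - cartan p l * cform l v.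
Proof.
rewrite /cform (bigD1 l) //= [X in _ = X - _](bigD1 l) //= /cox_refl eqxx.
rewrite (eq_bigr (fun r => cartan p r * v r)); last by move=> r /negbTE ->.
rewrite /cform; ring.
Qed.

Lemma cox_refl_invol l v : cox_refl l (cox_refl l v) = v.
Proof.
apply: functional_extensionality => p.
rewrite {1}/cox_refl cform_refl cartan_diag.
case: eqP => [->|/eqP pl]; last by rewrite /cox_refl (negbTE pl).
by rewrite /cox_refl eqxx; ring.
Qed.

Section DihedralRelation.
Variables (i j : L) (q : algC) (k : nat).
Hypothesis neq_ij : i != j.
Hypothesis cartan_ij : cartan i j = - (1 + q).
Hypothesis cartan_ji : cartan j i = - (1 + q^-1).
Hypothesis q_neq0 : q != 0.
Hypothesis q_neq1 : q != 1.
Hypothesis q_order : q ^+ k = 1.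

Definition rot (v : V) : V := cox_refl i (cox_refl j v).

(* The rotation fixes the coordinates off {i, j} and the linear forms [cst_i],
   [cst_j], and multiplies the forms [eig], [eigV] by q, q^-1; as these four
   forms determine v i and v j, the rotation has order dividing k. *)
Definition cst_i v := cform i v - 2 * v i - cartan i j * v j.
Definition cst_j v := cform j v - cartan j i * v i - 2 * v j.
Definition eig v := (q - 1) * (v i - v j) - (q * cst_j v + cst_i v).
Definition eigV v := (q^-1 - 1) * (v i - q * v j) - (cst_j v + cst_i v).

Lemma rot_other v p : p != i -> p != j -> rot v p = v p.
Proof. by move=> /negbTE pi /negbTE pj; rewrite /rot /cox_refl pi pj. Qed.

Lemma rot_i v : rot v i = v i - (cform i v - cartan i j * cform j v).
Proof. by rewrite /rot /cox_refl eqxx (negbTE neq_ij) cform_refl. Qed.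

Lemma rot_j v : rot v j = v j - cform j v.
Proof. by rewrite /rot /cox_refl eqxx eq_sym (negbTE neq_ij). Qed.

Lemma cform_rot_i v : cform i (rot v) = - (cform i v - cartan i j * cform j v).
Proof. by rewrite /rot !cform_refl cartan_diag; ring. Qed.

Lemma cform_rot_j v :
  cform j (rot v) = - cform j v - cartan j i * (cform i v - cartan i j * cform j v).
Proof. by rewrite /rot !cform_refl cartan_diag; ring. Qed.

Lemma cst_i_rot v : cst_i (rot v) = cst_i v.
Proof. by rewrite /cst_i cform_rot_i rot_i rot_j; ring. Qed.

Lemma cst_j_rot v : cst_j (rot v) = cst_j v.
Proof. by rewrite /cst_j cform_rot_j rot_i rot_j; ring. Qed.

Lemma eig_rot v : eig (rot v) = q * eig v.
Proof.
by rewrite /eig cst_i_rot cst_j_rot /cst_i /cst_j rot_i rot_j cartan_ij cartan_ji; field.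
Qed.

Lemma eigV_rot v : eigV (rot v) = q^-1 * eigV v.
Proof.
by rewrite /eigV cst_i_rot cst_j_rot /cst_i /cst_j rot_i rot_j cartan_ij cartan_ji; field.
Qed.

Lemma iter_rot t v :
  [/\ forall p, p != i -> p != j -> iter t rot v p = v p,
      cst_i (iter t rot v) = cst_i v, cst_j (iter t rot v) = cst_j v,
      eig (iter t rot v) = q ^+ t * eig v & eigV (iter t rot v) = q^-1 ^+ t * eigV v].
Proof.
elim: t => [|t [IH1 IH2 IH3 IH4 IH5]] /=; first by split => //; rewrite mul1r.
split.
- by move=> p pi pj; rewrite rot_other // IH1.
- by rewrite cst_i_rot.
- by rewrite cst_j_rot.
- by rewrite eig_rot IH4 exprS mulrA.
- by rewrite eigV_rot IH5 exprS mulrA.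
Qed.

Lemma iter_rot_order v : iter k rot v = v.
Proof.
have [Hoff Hci Hcj Heig HeigV] := iter_rot k v.
rewrite q_order mul1r exprVn q_order invr1 mul1r in Heig HeigV.
move: Heig HeigV; rewrite /eig /eigV Hci Hcj => /addIr Heig /addIr HeigV.
have q1 : q - 1 != 0 by rewrite subr_eq0.
have q1' : q^-1 - 1 != 0 by rewrite subr_eq0 invr_eq1.
move/(mulfI q1): Heig => Heig; move/(mulfI q1'): HeigV => HeigV.
have Hj : iter k rot v j = v j.
  apply: (mulfI q1).
  have -> : (q - 1) * iter k rot v j = (iter k rot v i - iter k rot v j)
            - (iter k rot v i - q * iter k rot v j) by ring.
  by rewrite Heig HeigV; ring.
have Hi : iter k rot v i = v i by move: Heig; rewrite Hj => /addIr.
apply: functional_extensionality => p.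
by case: (eqVneq p i) => [->//|pi]; case: (eqVneq p j) => [->//|pj]; exact: Hoff.
Qed.

End DihedralRelation.

Hypothesis Hm : coxeter_matrix m.

Lemma cartan_dihedral i j k : i != j -> m i j = Some k ->
  [/\ cartan i j = - (1 + cox_q i j), cartan j i = - (1 + (cox_q i j)^-1),
      cox_q i j != 0, cox_q i j != 1 & cox_q i j ^+ k = 1].
Proof.
case: Hm => _ Hsym Hge2 ij mij.
have k2 := Hge2 _ _ _ ij mij.
have pr := prim_rootP (leq_trans (isT : (0 < 2)%N) k2).
have r0 : prim_root k != 0 by rewrite (prim_root_eq0 pr); case: k k2 {mij pr}.
have r1 : prim_root k != 1.
  apply/eqP => e; have := prim_order_dvd pr 1; rewrite expr1 e eqxx dvdn1.
  by case: k k2 {mij pr r0 e} => // [] [].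
have rk : prim_root k ^+ k = 1 by exact: prim_expr_order.
rewrite /cartan (negbTE ij) eq_sym (negbTE ij) /cox_q.
case: ltngtP => [lij|lji|eij].
- by rewrite mij /=; split.
- rewrite -(Hsym i j) mij /= invrK; split => //.
  + by rewrite invr_eq0.
  + by rewrite invr_eq1.
  + by rewrite exprVn rk invr1.
- by move: ij; rewrite (val_inj eij) eqxx.
Qed.

Lemma cox_refl_rel i j k : m i j = Some k ->
  iter k (comp (cox_refl i \o cox_refl j)) id = id.
Proof.
move=> mij; apply: functional_extensionality => v.
have -> : iter k (comp (cox_refl i \o cox_refl j)) id v = iter k (rot i j) v.
  by elim: k {mij} => // k IH; exact: (congr1 (rot i j) IH).
case: (eqVneq i j) => [eij|ij].
  case: Hm => Hdiag _ _; move: mij; rewrite eij Hdiag => -[<-] /=.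
  exact: cox_refl_invol.
have [cij cji q0 q1 qk] := cartan_dihedral ij mij.
exact: (iter_rot_order ij cij cji q0 q1 qk).
Qed.

Lemma eval_refl_notin (I : {set L}) a x v : a \notin I -> all (fun c => c \in I) x ->
  eval_word (@comp V V V) id cox_refl x v a = v a.
Proof.
move=> aI; elim: x => //= c x IH /andP [cI xI].
rewrite {1}/comp /cox_refl.
have -> : (a == c) = false by apply/negbTE; apply: contraNneq aI => ->.
exact: IH.
Qed.

Lemma cox_refl_sqr l : cox_refl l \o cox_refl l = id.
Proof. by apply: functional_extensionality => v; exact: cox_refl_invol. Qed.

(* The s_c with c in I only change c-th coordinates, while s_a negates the
   a-th coordinate of the a-th basis vector. *)
Lemma eval_refl_neq_refl (I : {set L}) a x : a \notin I -> all (fun c => c \in I) x ->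
  eval_word (@comp V V V) id cox_refl x <> cox_refl a.
Proof.
move=> aI xI /(congr1 (fun F => F (fun p => (p == a)%:R) a)).
rewrite (eval_refl_notin _ aI xI) /cox_refl /cform eqxx (bigD1 a) //= eqxx cartan_diag.
rewrite big1 => [|r /negbTE ->]; last by rewrite mulr0.
by rewrite mulr1 addr0 -{1}[1]addr0 => /addrI /eqP; rewrite eq_sym oppr_eq0 pnatr_eq0.
Qed.

End GeometricRepresentation.

Fixpoint xorsum (g : nat -> bool) (k : nat) : bool :=
  if k is k'.+1 then xorsum g k' (+) g k' else false.

Lemma eq_xorsum g h k : g =1 h -> xorsum g k = xorsum h k.
Proof. by move=> E; elim: k => //= k ->; rewrite E. Qed.

Lemma xorsumD g a b : xorsum g (a + b) = xorsum g a (+) xorsum (fun e => g (a + e)) b.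
Proof. by elim: b => /= [|b IH]; rewrite ?addn0 ?addbF // addnS /= IH addbA. Qed.

Lemma xorsumS g k : xorsum g k.+1 = g 0 (+) xorsum (fun e => g e.+1) k.
Proof. by rewrite -add1n xorsumD. Qed.

Lemma xorsum_pairs g k : xorsum (fun l => g (2 * l) (+) g (2 * l).+1) k = xorsum g (2 * k).
Proof. by elim: k => // k IH; rewrite mulnS /= IH !add0n add1n addbA. Qed.

Lemma xorsum_period g k : (forall e, g (k + e) = g e) -> xorsum g (k + k) = false.
Proof. by move=> E; rewrite xorsumD (eq_xorsum _ E) addbb. Qed.

Section DecidableEquality.
Variable W : group.

Definition eqW (x y : W) : bool :=
  if excluded_middle_informative (x = y) then true else false.

Lemma eqWP (x y : W) : reflect (x = y) (eqW x y).
Proof. by rewrite /eqW; case: excluded_middle_informative => h; constructor. Qed.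

Lemma eqWxx (x : W) : eqW x x.
Proof. exact/eqWP. Qed.

Lemma eqW_conj (g t u : W) : eqW (ginv g ⊙ t ⊙ g) u = eqW t (g ⊙ u ⊙ ginv g).
Proof.
apply/eqWP/eqWP => [<-|->]; first by rewrite -!gmulA gmulVr gmulr1 gmulVK.
by rewrite -!gmulA gmulV gmulr1 gmulKV.
Qed.

End DecidableEquality.

Section Coxeter.
Variable n : nat.
Local Notation L := 'I_n.+1.
Variables (W : group) (s : L -> W) (m : L -> L -> option nat).
Hypothesis Hm : coxeter_matrix m.
Hypothesis sinv : forall i, s i ⊙ s i = gone W.
Hypothesis kerP : forall g, phi s g = gone W <-> nclos m g.

Local Notation phiw := (eval_word (@gmul W) (gone W) s).

Lemma phiw_cat x y : phiw (x ++ y) = phiw x ⊙ phiw y.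
Proof. by apply: eval_word_cat; [exact: gmulA | exact: gmul1]. Qed.

Lemma phiw_rev x : phiw (rev x) = ginv (phiw x).
Proof.
apply: ginv_uniq; apply: eval_word_revKr;
  [exact: gmulA | exact: gmul1 | exact: gmulr1 | exact: sinv].
Qed.

Lemma ginv_s a : ginv (s a) = s a.
Proof. exact: ginv_id_of_sqr1. Qed.

Lemma phi_reduce l : phi s (reduce l) = phiw l.
Proof.
have := eval_word_foldr_push (@gmulA W) (@gmul1 W) sinv l [::].
by rewrite gmulr1.
Qed.

Lemma phi_mul x y : phi s (mulG x y) = phi s x ⊙ phi s y.
Proof. exact: (eval_Gn2_mul (@gmulA W) (@gmul1 W) sinv). Qed.

Lemma phi_inv x : phi s (invG x) = ginv (phi s x).
Proof. by apply: ginv_uniq; rewrite -phi_mul mulGV. Qed.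

(* W is presented by the Coxeter relations, so every monoid with involutive
   generators satisfying them receives a well-defined map from W. *)
Lemma eval_word_congr (M : Type) (mop : M -> M -> M) (mone : M)
  (mA : forall x y z, mop x (mop y z) = mop (mop x y) z)
  (m1l : forall x, mop mone x = x) (m1r : forall x, mop x mone = x)
  (e : L -> M) (e2 : forall a, mop (e a) (e a) = mone)
  (rel : forall i j k, m i j = Some k -> iter k (mop (mop (e i) (e j))) mone = mone)
  x y : phiw x = phiw y -> eval_word mop mone e x = eval_word mop mone e y.
Proof.
move=> Exy.
have ker : phi s (reduce (rev x ++ y)) = gone W.
  by rewrite phi_reduce phiw_cat phiw_rev Exy gmulV.
have := eval_nclos mA m1l m1r e2 rel (proj1 (kerP _) ker).
rewrite /eval_Gn2 /= eval_word_foldr_push //= m1r eval_word_cat // => Eone.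
have := congr1 (mop (eval_word mop mone e x)) Eone.
by rewrite mA eval_word_revKr // m1l m1r.
Qed.

Definition wpow (w : W) (e : nat) : W := iter e (gmul w) (gone W).

Lemma wpowD w a b : wpow w (a + b) = wpow w a ⊙ wpow w b.
Proof. by elim: a => /= [|a IH]; rewrite ?gmul1 // IH gmulA. Qed.

Lemma wpowSr w e : wpow w e.+1 = wpow w e ⊙ w.
Proof. by rewrite -addn1 wpowD /= gmulr1. Qed.

Lemma phiw_rel i j k : m i j = Some k -> wpow (s i ⊙ s j) k = gone W.
Proof.
move=> mij; have ker := proj2 (kerP _) (nc_rel mij).
change (eval_Gn2 (@gmul W) (gone W) s (expG (mulG (alpha i) (alpha j)) k) = gone W) in ker.
rewrite (eval_Gn2_exp (@gmulA W) (@gmul1 W) sinv) in ker.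
by rewrite (eval_Gn2_mul (@gmulA W) (@gmul1 W) sinv) /eval_Gn2 /= !gmulr1 in ker.
Qed.

Lemma gen_in_parabolic (I : {set L}) a x :
  all (fun c => c \in I) x -> phiw x = s a -> a \in I.
Proof.
move=> xI Ex; apply/negPn/negP => aI.
have Exa : phiw x = phiw [:: a] by rewrite Ex /= gmulr1.
apply: (eval_refl_neq_refl aI xI).
exact: (eval_word_congr (mop := @comp (L -> algC) _ _) (fun _ _ _ => erefl)
  (fun _ => erefl) (fun _ => erefl) (@cox_refl_sqr n m) (cox_refl_rel Hm) Exa).
Qed.

(* Tits' reflection cocycle: a word is sent to its value w together with the
   parity n(w, t) of the number of times the reflection t occurs in the
   sequence of reflections of the word. *)
Definition cocycle := (W * (W -> bool))%type.

Definition cmul (x y : cocycle) : cocycle :=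
  (x.1 ⊙ y.1, fun t => x.2 t (+) y.2 (ginv x.1 ⊙ t ⊙ x.1)).

Definition cone : cocycle := (gone W, fun _ => false).

Definition cgen (a : L) : cocycle := (s a, fun t => eqW t (s a)).

Lemma cmulA x y z : cmul x (cmul y z) = cmul (cmul x y) z.
Proof.
case: x => a f; case: y => b g; case: z => c h; rewrite /cmul /=.
congr pair; first exact: gmulA.
by apply: functional_extensionality => t; rewrite addbA ginvM -!gmulA.
Qed.

Lemma cmul1 x : cmul cone x = x.
Proof.
case: x => a f; rewrite /cmul /=; congr pair; first exact: gmul1.
by apply: functional_extensionality => t; rewrite ginv1 gmul1 gmulr1.
Qed.

Lemma cmulr1 x : cmul x cone = x.
Proof.
case: x => a f; rewrite /cmul /=; congr pair; first exact: gmulr1.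
by apply: functional_extensionality => t; rewrite addbF.
Qed.

Lemma cgen_sqr a : cmul (cgen a) (cgen a) = cone.
Proof.
rewrite /cmul /=; congr pair; first exact: sinv.
apply: functional_extensionality => t.
by rewrite eqW_conj ginv_s -gmulA sinv gmulr1 addbb.
Qed.

Lemma iter_cmul_fst (x : cocycle) k : (iter k (cmul x) cone).1 = wpow x.1 k.
Proof. by elim: k => //= k ->. Qed.

Lemma iter_cmul_snd (x : cocycle) k t :
  (iter k (cmul x) cone).2 t =
  xorsum (fun l => x.2 (ginv (wpow x.1 l) ⊙ t ⊙ wpow x.1 l)) k.
Proof.
elim: k t => [//|k IH] t; rewrite iterS xorsumS /= IH ginv1 gmul1 gmulr1.
by congr addb; apply: eq_xorsum => e; rewrite ginvM !gmulA.
Qed.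

Lemma dihedral_refl i j l :
  s i ⊙ ginv (wpow (s i ⊙ s j) l) = wpow (s i ⊙ s j) l ⊙ s i.
Proof.
set w := s i ⊙ s j.
elim: l => [|l IH]; first by rewrite /= ginv1 gmulr1 gmul1.
rewrite /wpow iterS -/(wpow w l) ginvM gmulA IH.
have -> : ginv w = s j ⊙ s i by rewrite /w ginvM !ginv_s.
by rewrite !gmulA -(gmulA _ (s i) (s j)) -/w -wpowSr -!gmulA.
Qed.

(* The reflections of the word (s_i s_j)^k are the w^e s_i, e < 2k. *)
Lemma cgen_pair_snd i j l t (w := s i ⊙ s j) :
  (cmul (cgen i) (cgen j)).2 (ginv (wpow w l) ⊙ t ⊙ wpow w l) =
  eqW t (wpow w (2 * l) ⊙ s i) (+) eqW t (wpow w (2 * l).+1 ⊙ s i).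
Proof.
rewrite /cmul /cgen /= eqW_conj; set P := wpow w l; congr addb.
  by rewrite mul2n -addnn wpowD -gmulA dihedral_refl gmulA.
have -> : ginv (s i) ⊙ (ginv P ⊙ t ⊙ P) ⊙ s i = ginv (P ⊙ s i) ⊙ t ⊙ (P ⊙ s i).
  by rewrite ginvM !gmulA.
rewrite eqW_conj; congr (eqW t _).
rewrite ginvM ginv_s dihedral_refl mul2n -addnn wpowD !gmulA.
by rewrite -(gmulA P (s i) (s j)) -/w -wpowSr.
Qed.

Lemma cgen_rel i j k : m i j = Some k ->
  iter k (cmul (cmul (cgen i) (cgen j))) cone = cone.
Proof.
move=> /phiw_rel Hk; rewrite (surjective_pairing (iter _ _ _)) iter_cmul_fst.
congr pair => //; apply: functional_extensionality => t.
pose g e := eqW t (wpow (s i ⊙ s j) e ⊙ s i).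
rewrite iter_cmul_snd (eq_xorsum (h := fun l => g (2 * l) (+) g (2 * l).+1));
  last by move=> l; exact: cgen_pair_snd.
by rewrite xorsum_pairs mul2n -addnn xorsum_period // => e; rewrite /g wpowD Hk gmul1.
Qed.

Definition refl_parity (l : seq L) : W -> bool := (eval_word cmul cone cgen l).2.

Lemma refl_parity_cons a l t :
  refl_parity (a :: l) t = eqW t (s a) (+) refl_parity l (s a ⊙ t ⊙ s a).
Proof. by rewrite /refl_parity /= ginv_s. Qed.

Lemma refl_parity_congr x y : phiw x = phiw y -> refl_parity x = refl_parity y.
Proof.
move=> Exy; rewrite /refl_parity.
by rewrite (eval_word_congr cmulA cmul1 cmulr1 cgen_sqr cgen_rel Exy).
Qed.

Fixpoint nth_refl (l : seq L) (j : nat) : W :=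
  match l with
  | [::] => gone W
  | a :: l' => if j is j'.+1 then s a ⊙ nth_refl l' j' ⊙ s a else s a
  end.

Fixpoint del_nth (l : seq L) (j : nat) : seq L :=
  match l with
  | [::] => [::]
  | a :: l' => if j is j'.+1 then a :: del_nth l' j' else l'
  end.

Lemma refl_parity_nth_refl l t :
  refl_parity l t -> exists2 j, j < size l & t = nth_refl l j.
Proof.
elim: l t => [//|a l IH] t; rewrite refl_parity_cons.
case: eqWP => [->|_] /=; first by exists 0.
case/IH => j jl Ej; exists j.+1 => //=.
by rewrite -Ej !gmulA sinv gmul1 -gmulA sinv gmulr1.
Qed.

Lemma nth_refl_del l j : j < size l -> nth_refl l j ⊙ phiw l = phiw (del_nth l j).
Proof.
elim: l j => [|a l IH] [|j] //= jl; first by rewrite gmulA sinv gmul1.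
by rewrite -IH // -!gmulA (gmulA (s a) (s a)) sinv gmul1.
Qed.

Lemma size_del_nth l j : j < size l -> size (del_nth l j) = (size l).-1.
Proof.
by elim: l j => [|a l IH] [|j] //= jl; rewrite IH // prednK //; case: (size l) jl.
Qed.

Lemma mem_del_nth l j : {subset del_nth l j <= l}.
Proof.
elim: l j => [|a l IH] [|j] //= c; first by move=> cl; rewrite inE cl orbT.
by rewrite !inE => /orP [->//|/IH ->]; rewrite orbT.
Qed.

(* Either s_a is a reflection of x, and deleting that letter of x yields s_a w;
   or, as n(s_a w, s_a) = 1 + n(w, s_a), it is a reflection of y, and deleting
   that letter of y yields a word for w shorter than y. *)
Lemma exchange x y a : phiw y = s a ⊙ phiw x ->
  (forall z, phiw z = phiw x -> size y < size z) ->
  exists2 j, j < size x & s a ⊙ phiw x = phiw (del_nth x j).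
Proof.
move=> Ey ltyx.
case Pxa: (refl_parity x (s a)).
  by have [j jx ->] := refl_parity_nth_refl Pxa; exists j; rewrite ?nth_refl_del.
have Eay : phiw (a :: y) = phiw x by rewrite /= Ey gmulA sinv gmul1.
have := congr1 (fun f => f (s a)) (refl_parity_congr Eay).
rewrite refl_parity_cons eqWxx Pxa /= -gmulA sinv gmulr1.
move/negbFE; case/refl_parity_nth_refl => j jy Ej.
have := ltyx (del_nth y j); rewrite -nth_refl_del // -Ej Ey gmulA sinv gmul1.
move/(_ erefl); rewrite size_del_nth //.
by case: (size y) jy => // k _ /=; rewrite ltnNge leqnSn.
Qed.

Definition min_word (r : seq L) := forall z, phiw z = phiw r -> size r <= size z.

Lemma min_word_exists x : exists2 r, phiw r = phiw x & min_word r.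
Proof.
suff: forall N z, size z <= N -> phiw z = phiw x -> exists2 r, phiw r = phiw x & min_word r.
  by move/(_ _ x (leqnn _)); apply.
elim=> [|N IH] z zN Ez.
  by exists z => // y _; move: zN; rewrite leqn0 => /eqP ->.
case: (classic (exists y, phiw y = phiw z /\ size y < size z)).
  case=> y [Ey yz]; apply: (IH y); last by rewrite Ey.
  by rewrite -ltnS (leq_trans yz).
move=> NE; exists z => // y Ey; rewrite leqNgt; apply/negP => yz.
by apply: NE; exists y.
Qed.

Lemma min_word_parabolic r (I : {set L}) x : min_word r ->
  all (fun c => c \in I) x -> phiw x = phiw r -> all (fun c => c \in I) r.
Proof.
elim: r x => // a r IH x Hr xI Ex /=.
have rr : min_word r.
  by move=> z Ez; have := Hr (a :: z); rewrite /= Ez; exact.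
have E1 : phiw r = s a ⊙ phiw x by rewrite Ex /= gmulA sinv gmul1.
have [j jx Ej] := exchange E1 (fun z Ez => Hr z (etrans Ez Ex)).
have dI : all (fun c => c \in I) (del_nth x j).
  by apply/allP => c /mem_del_nth cx; move/allP: xI; apply.
apply/andP; split; last by apply: (IH (del_nth x j)) => //; rewrite -Ej -E1.
apply: (gen_in_parabolic (x := del_nth x j ++ rev x)).
  by rewrite all_cat dI all_rev.
by rewrite phiw_cat -Ej phiw_rev gmulrK.
Qed.

Lemma inWJ_word (J : {set L}) w :
  inWJ s J w <-> exists2 x, all (fun c => c \in J) x & phiw x = w.
Proof.
split; last first.
  case=> x xJ <-; elim: x xJ => [|c x IH] /=; first by move=> _; apply: wj_one.
  by case/andP => cJ xJ; apply: wj_mul; [exact: wj_gen | exact: IH].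
elim=> {w} [|j jJ|x y _ [a aJ <-] _ [b bJ <-]|x _ [a aJ <-]].
- by exists [::].
- by exists [:: j]; rewrite /= ?jJ ?gmulr1.
- by exists (a ++ b); rewrite ?all_cat ?aJ ?bJ ?phiw_cat.
- by exists (rev a); rewrite ?all_rev ?phiw_rev.
Qed.

Lemma gen_in_WJ (A : {set L}) j : inWJ s A (s j) -> j \in A.
Proof. by case/inWJ_word => x xA Ex; exact: gen_in_parabolic xA Ex. Qed.

Lemma inWJ_sym (A : {set L}) a b : inWJ s A (a ⊙ ginv b) -> inWJ s A (b ⊙ ginv a).
Proof. by apply: coset_sym; exact: wj_inv. Qed.

Hypothesis surj : forall w : W, exists g, phi s g = w.

Lemma inWJ_bigcap (J : {set L}) w :
  (forall i, i \in J -> inWJ s (~: [set i]) w) -> inWJ s (~: J) w.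
Proof.
move=> Hw; have [g Eg] := surj w.
have [r Er rmin] := min_word_exists (sval g).
have Erw : phiw r = w by rewrite Er.
apply/inWJ_word; exists r => //.
apply/allP => c cr; rewrite inE; apply/negP => cJ.
have [y yc Ey] := proj1 (inWJ_word _ _) (Hw c cJ).
have := min_word_parabolic rmin yc (etrans Ey (esym Erw)).
by move/allP/(_ c cr); rewrite !inE eqxx.
Qed.

Local Notation H := (kerphi s).

Lemma inK_inWJ (A : {set L}) g : inK A g -> inWJ s A (phi s g).
Proof. by move=> Ag; apply/inWJ_word; exists (sval g). Qed.

Lemma inWJ_inK (A : {set L}) w : inWJ s A w -> exists2 k, inK A k & phi s k = w.
Proof.
case/inWJ_word => x xA <-; exists (reduce x); last exact: phi_reduce.
by apply/allP => c /mem_foldr_push; rewrite cats0; move/allP: xA; exact.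
Qed.

Lemma multicell_shift (A : {set L}) g g' (X : Gn2 n -> Prop) :
  inWJ s A (phi s g' ⊙ ginv (phi s g)) ->
  (exists h, H h /\ forall x, X x <-> cosetK A (mulG g h) x) ->
  (exists h, H h /\ forall x, X x <-> cosetK A (mulG g' h) x).
Proof.
move=> /inWJ_inK [k kA Ek] [h [Hh EX]].
exists (mulG (invG g') (mulG k (mulG g h))); split.
  by rewrite /kerphi !phi_mul phi_inv Ek Hh gmulr1 -!gmulA gmulKV gmulV.
rewrite mulVKG.
have Hk : inK A (mulG (mulG g h) (invG (mulG k (mulG g h)))).
  by rewrite invGM mulGA mulGV mul1G; exact: inKV.
move=> x; rewrite EX; split => Hx.
  exact: (coset_trans (G := Gn2_group n) (S := inK A) (@inKM n A) Hk Hx).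
exact: (coset_trans (G := Gn2_group n) (S := inK A) (@inKM n A)
  (coset_sym (G := Gn2_group n) (S := inK A) (@inKV n A) Hk) Hx).
Qed.

Lemma mc_eq_iff (J J' : {set L}) g g' :
  mc_eq H J g J' g' <-> J = J' /\ inWJ s (~: J) (phi s g' ⊙ ginv (phi s g)).
Proof.
split=> [E|[<- C] X]; last by split; apply: multicell_shift => //; exact: inWJ_sym.
have : multicell H J g (cosetK (~: J) g) by exists (oneG n); split => // x; rewrite mulG1.
case/E => h' [Hh' /cosetK_eq [/setC_inj EJ Hk]]; split => //.
by apply: inWJ_sym; have := inK_inWJ Hk; rewrite phi_mul phi_inv phi_mul Hh' gmulr1.
Qed.

Lemma vertX_iff (a b : L * Gn2 n) :
  vertX H a b <-> a.1 = b.1 /\ inWJ s (~: [set a.1]) (phi s b.2 ⊙ ginv (phi s a.2)).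
Proof.
by rewrite /vertX mc_eq_iff; split; case=> E C; split => //; [exact: set1_inj | rewrite E].
Qed.

Lemma vertW_iff (a b : L * W) :
  vertW s a b <-> a.1 = b.1 /\ inWJ s (~: [set a.1]) (b.2 ⊙ ginv a.2).
Proof.
case: a b => i w [j w'] /=; split=> [E|[<- C] x]; last first.
  have SM u v : inWJ s (~: [set i]) u -> inWJ s (~: [set i]) v ->
      inWJ s (~: [set i]) (u ⊙ v) by exact: wj_mul.
  by split; apply: (coset_trans SM) => //; exact: inWJ_sym.
have Cw : inWJ s (~: [set j]) (w ⊙ ginv w').
  by apply/(E w); rewrite /cosetW gmulVr; exact: wj_one.
suff eij : i = j by split=> //; subst j; exact: inWJ_sym.
apply/eqP/negP => /negP nij.
have sjw : inWJ s (~: [set j]) ((s j ⊙ w) ⊙ ginv w').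
  by apply/(E (s j ⊙ w)); rewrite /cosetW gmulrK; apply: wj_gen; rewrite !inE eq_sym.
have : inWJ s (~: [set j]) (s j).
  by have := wj_mul sjw (wj_inv Cw); rewrite ginvM ginvK -!gmulA gmulKV gmulVr gmulr1.
by move/gen_in_WJ; rewrite !inE eqxx.
Qed.

Definition phi_vertex (a : L * Gn2 n) : L * W := (a.1, phi s a.2).

Lemma phi_cell (J : {set L}) g b :
  (exists2 a, cellX H J g a & vertW s (phi_vertex a) b) <-> cellW s J (phi s g) b.
Proof.
split=> [[a [i iJ /vertX_iff Ha] Hb]|[i iJ Hb]].
  have Hv : vertW s (phi_vertex a) (i, phi s g) by apply/vertW_iff.
  by exists i => // x; rewrite -Hb; exact: Hv.
exists (i, g); first by exists i => //; rewrite /vertX /mc_eq.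
by move=> x; rewrite Hb.
Qed.

Lemma cellX_sub (J J' : {set L}) g g' :
  (forall v, cellX H J g v <-> cellX H J' g' v) ->
  J \subset J' /\ forall i, i \in J -> inWJ s (~: [set i]) (phi s g' ⊙ ginv (phi s g)).
Proof.
move=> E; suff key i :
    i \in J -> i \in J' /\ inWJ s (~: [set i]) (phi s g' ⊙ ginv (phi s g)).
  by split=> [|i /key []//]; apply/subsetP => i /key [].
move=> iJ; have : cellX H J g (i, g) by exists i => //; rewrite /vertX /mc_eq.
by case/E => i' i'J /vertX_iff [/= Ei C]; rewrite -Ei in i'J.
Qed.

Lemma multiplicity_one_kerphi : multiplicity_one H.
Proof.
move=> J g J' g' E; apply/mc_eq_iff.
have [sJJ' inW] := cellX_sub E.
have [sJ'J _] := cellX_sub (fun v => iff_sym (E v)).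
split; first by apply/eqP; rewrite eqEsubset sJJ' sJ'J.
exact: inWJ_bigcap.
Qed.

Lemma complex_iso_phi : complex_iso H s phi_vertex.
Proof.
split=> [a b|[j w]|J g|J w].
- by split=> [/vertX_iff|/vertW_iff] [E C]; [apply/vertW_iff | apply/vertX_iff].
- by have [g <-] := surj w; exists (j, g).
- by exists J, (phi s g) => b; exact: phi_cell.
- by have [g <-] := surj w; exists J, g => b; exact: phi_cell.
Qed.

End Coxeter.

Theorem proposition10 (n : nat) (m : 'I_n.+1 -> 'I_n.+1 -> option nat)
  (W : group) (s : 'I_n.+1 -> W) :
  coxeter_matrix m -> coxeter_system s m ->
  multiplicity_one (kerphi s) /\
  exists F : 'I_n.+1 * Gn2 n -> 'I_n.+1 * W, complex_iso (kerphi s) s F.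
Proof.
move=> Hm [sinv surj kerP]; split.
  exact: multiplicity_one_kerphi Hm sinv kerP surj.
by exists (phi_vertex s); exact: complex_iso_phi Hm sinv kerP surj.
Qed.
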